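(* Let $\Theta$ be an overconvergent Dwork operator on $A_0$. Choose rational numbers $b,c_1$ with $0<b\le b_\sigma$ such that $\Theta(X^u)\in L(qb,c_1)$ for all $u$ with $0\le u_i<q$. Then for every real number $c$, $\Theta(L(b,c))\subset L(qb,c+c_1)$.
   Context: $R$ is a complete discrete valuation ring of characteristic $0$ with uniformizer $\pi$, residue field $\mathbf{F}_q$, valuation $\mathrm{ord}_\pi$. Fix $n\ge1$; for $u\in\mathbf{Z}^n_{\ge0}$, $X^u=\prod X_i^{u_i}$, $|u|=\sum u_i$. $A_0=\{\sum a_uX^u:a_u\in R,\ \mathrm{ord}_\pi a_u\to\infty\}$, $A=\{\sum a_uX^u\in A_0:\liminf_{|u|\to\infty}\mathrm{ord}_\pi a_u/|u|>0\}$. $\sigma$ is an $R$-algebra endomorphism of $A_0$ with $\sigma(X_i)=X_i^q+\pi f_i$, $f_i\in A$. For $b>0$ and $c$, $L(b,c)=\{\sum_va_vX^v:a_v\in R,\ \mathrm{ord}_\pi a_v\ge b|v|+c\}$; $b_\sigma>0$ is a fixed rational with $\pi f_i\in L(b_\sigma,0)$ for all $i$. A Dwork operator on $A_0$ is an $R$-linear endomorphism $\Theta$ of $A_0$ with $\Theta(\sigma(a_1)a_2)=a_1\Theta(a_2)$ for $a_1,a_2\in A_0$; it is overconvergent if $\Theta(A)\subset A$. *)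

From HB Require Import structures.
From mathcomp Require Import all_boot all_order all_algebra.
From mathcomp Require Import reals.
Set Implicit Arguments. Unset Strict Implicit. Unset Printing Implicit Defensive.
Import Order.TTheory GRing.Theory Num.Theory.
Local Open Scope ring_scope.

Section Dwork.
Variable R : idomainType.
Variable n : nat.

Definition expo := n.-tuple nat.
Definition deg (u : expo) : nat := \sum_(i < n) tnth u i.

Definition ps := expo -> R.

Definition pi_dvd (pi : R) (m : nat) (a : R) : Prop := exists r, a = pi ^+ m * r.

(* ord_pi(a) >= x for a real number x: since ord_pi(a) is in N u {oo},
   this means pi^m | a for every natural m <= ceil(x), i.e. for every
   natural m with m < x + 1. *)
Definition ord_ge (RR : realType) (pi : R) (a : R) (x : RR) : Prop :=
  forall m : nat, (m%:R < x + 1) -> pi_dvd pi m a.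

(* R is a complete discrete valuation ring of characteristic 0 with
   uniformizer pi and residue field with q elements. *)
Definition is_complete_dvr (pi : R) (q : nat) : Prop :=
  [pchar R] =i pred0 /\
  pi != 0 /\ pi \notin GRing.unit /\
  (forall a : R, a != 0 -> exists m : nat, exists u : R,
       u \is a GRing.unit /\ a = pi ^+ m * u) /\
  (forall s : nat -> R, (forall k, pi_dvd pi k (s k.+1 - s k)) ->
       exists l : R, forall k, pi_dvd pi k (l - s k)) /\
  (exists reps : seq R,
       size reps = q /\
       (forall a : R, exists2 r, r \in reps & pi_dvd pi 1 (a - r)) /\
       (forall r1 r2, r1 \in reps -> r2 \in reps -> pi_dvd pi 1 (r1 - r2) -> r1 = r2)).

Definition inA0 (pi : R) (f : ps) : Prop :=
  forall k : nat, exists N : nat, forall u : expo, (N <= deg u)%N -> pi_dvd pi k (f u).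

Definition inL (RR : realType) (pi : R) (b c : RR) (f : ps) : Prop :=
  forall v : expo, ord_ge pi (f v) (b * (deg v)%:R + c).

Definition inA (RR : realType) (pi : R) (f : ps) : Prop :=
  inA0 pi f /\
  exists eps : RR, 0 < eps /\
    exists N : nat, forall u : expo, (N <= deg u)%N -> ord_ge pi (f u) (eps * (deg u)%:R).

Definition psadd (f g : ps) : ps := fun w => f w + g w.
Definition psscale (r : R) (f : ps) : ps := fun w => r * f w.
Definition psmul (f g : ps) : ps := fun w =>
  \sum_(t : n.-tuple 'I_(deg w).+1 | [forall i, (tnth t i <= tnth w i)%N])
     f (map_tuple (@nat_of_ord _) t) * g [tuple (tnth w i - tnth t i)%N | i < n].
Definition psmono (u : expo) : ps := fun v => if v == u then 1 else 0.
Definition psone : ps := psmono [tuple 0%N | _ < n].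
Definition psX (i : 'I_n) : ps := psmono [tuple (i == j : nat) | j < n].
Definition pspow (f : ps) (k : nat) : ps := iter k (psmul f) psone.

Definition is_ralg_endo (pi : R) (s : ps -> ps) : Prop :=
  (forall f, inA0 pi f -> inA0 pi (s f)) /\
  (forall f g, inA0 pi f -> inA0 pi g -> s (psadd f g) = psadd (s f) (s g)) /\
  (forall r f, inA0 pi f -> s (psscale r f) = psscale r (s f)) /\
  (forall f g, inA0 pi f -> inA0 pi g -> s (psmul f g) = psmul (s f) (s g)) /\
  s psone = psone.

Definition is_dwork_op (pi : R) (s Theta : ps -> ps) : Prop :=
  (forall f, inA0 pi f -> inA0 pi (Theta f)) /\
  (forall f g, inA0 pi f -> inA0 pi g -> Theta (psadd f g) = psadd (Theta f) (Theta g)) /\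
  (forall r f, inA0 pi f -> Theta (psscale r f) = psscale r (Theta f)) /\
  (forall a1 a2, inA0 pi a1 -> inA0 pi a2 -> Theta (psmul (s a1) a2) = psmul a1 (Theta a2)).

Definition overconvergent (RR : realType) (pi : R) (Theta : ps -> ps) : Prop :=
  forall f, inA RR pi f -> inA RR pi (Theta f).

End Dwork.

From HB Require Import structures.
From mathcomp Require Import all_boot all_order all_algebra.
From mathcomp Require Import reals.
From Stdlib Require Import FunctionalExtensionality ClassicalEpsilon.
From mathcomp Require Import lra.
Import Order.TTheory GRing.Theory Num.Theory.
Local Open Scope ring_scope.
Set Implicit Arguments. Unset Strict Implicit. Unset Printing Implicit Defensive.

(* We show that Theta g lies in L(qb, c + c1) modulo pi^m, by induction on m.
   As Theta is only finitely additive, write g = (polynomial) + pi^m t with t in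
   A_0; modulo pi^m only the Theta(X^v) then matter, and g_v Theta(X^v) has order
   >= (b|v| + c) + (qb|w| + c1 - b|v|) at w as soon as Theta(X^v) lies in
   L(qb, c1 - b|v|).  For v with all v_i < q this is the hypothesis; otherwise
   v = v' + q e_i, and the Dwork relation applied to
   sigma(X_i) X^v' = X^v + pi f_i X^v' gives
   Theta(X^v) = X_i Theta(X^v') - pi Theta(f_i X^v'): the first term is handled
   by induction on |v|, the second, with f_i X^v' in L(b, -1 - b|v'|), by the
   statement modulo pi^(m-1). *)

Section PiDivisibility.
Variables (R : idomainType) (pi : R).

Lemma pi_dvd0 m : pi_dvd pi m 0.
Proof. by exists 0; rewrite mulr0. Qed.

Lemma pi_dvd_exp0 a : pi_dvd pi 0 a.
Proof. by exists a; rewrite mul1r. Qed.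

Lemma pi_dvd_expr m : pi_dvd pi m (pi ^+ m).
Proof. by exists 1; rewrite mulr1. Qed.

Lemma pi_dvdD m a b : pi_dvd pi m a -> pi_dvd pi m b -> pi_dvd pi m (a + b).
Proof. by move=> [r ->] [s ->]; exists (r + s); rewrite mulrDr. Qed.

Lemma pi_dvdB m a b : pi_dvd pi m a -> pi_dvd pi m b -> pi_dvd pi m (a - b).
Proof. by move=> [r ->] [s ->]; exists (r - s); rewrite mulrBr. Qed.

Lemma pi_dvdMr m a b : pi_dvd pi m a -> pi_dvd pi m (a * b).
Proof. by move=> [r ->]; exists (r * b); rewrite mulrA. Qed.

Lemma pi_dvdMl m a b : pi_dvd pi m b -> pi_dvd pi m (a * b).
Proof. by rewrite mulrC; apply: pi_dvdMr. Qed.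

Lemma pi_dvdM m k a b : pi_dvd pi m a -> pi_dvd pi k b -> pi_dvd pi (m + k) (a * b).
Proof. by move=> [r ->] [s ->]; exists (r * s); rewrite exprD mulrACA. Qed.

Lemma pi_dvd_leq k m a : (k <= m)%N -> pi_dvd pi m a -> pi_dvd pi k a.
Proof. by move=> km [r ->]; exists (pi ^+ (m - k) * r); rewrite mulrA -exprD subnKC. Qed.

Lemma pi_dvd_cancel m k a : pi != 0 -> pi_dvd pi (m + k) (pi ^+ m * a) -> pi_dvd pi k a.
Proof.
move=> pi_neq0 [r]; rewrite exprD -mulrA => /mulfI-> //.
  by exists r.
by rewrite expf_neq0.
Qed.

End PiDivisibility.

Section TruncatedValuation.
Variables (R : idomainType) (pi : R) (RR : realType).
Implicit Types (a b : R) (x y : RR).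

Definition ord_ge_upto m a x : Prop :=
  forall k, (k <= m)%N -> k%:R < x + 1 -> pi_dvd pi k a.

Lemma ord_geP a x : ord_ge pi a x <-> forall m, ord_ge_upto m a x.
Proof. by split=> [H m k _ | H k]; [apply: H | apply: (H k)]. Qed.

Lemma ord_ge0 x : ord_ge pi 0 x.
Proof. by move=> k _; apply: pi_dvd0. Qed.

Lemma ord_ge_upto0 a x : ord_ge_upto 0 a x.
Proof. by move=> k; rewrite leqn0 => /eqP-> _; apply: pi_dvd_exp0. Qed.

Lemma ord_ge_upto_le m a x y : x <= y -> ord_ge_upto m a y -> ord_ge_upto m a x.
Proof. by move=> xy H k km kx; apply: H => //; apply: lt_le_trans kx _; rewrite lerD2r. Qed.

Lemma ord_ge_uptoD m a b x :
  ord_ge_upto m a x -> ord_ge_upto m b x -> ord_ge_upto m (a + b) x.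
Proof. by move=> Ha Hb k km kx; apply: pi_dvdD; [apply: Ha | apply: Hb]. Qed.

Lemma ord_ge_uptoB m a b x :
  ord_ge_upto m a x -> ord_ge_upto m b x -> ord_ge_upto m (a - b) x.
Proof. by move=> Ha Hb k km kx; apply: pi_dvdB; [apply: Ha | apply: Hb]. Qed.

Lemma ord_ge_upto_sum m (I : Type) (r : seq I) (P : pred I) (F : I -> R) x :
  (forall i, P i -> ord_ge_upto m (F i) x) -> ord_ge_upto m (\sum_(i <- r | P i) F i) x.
Proof.
move=> H; apply: (big_ind (fun s => ord_ge_upto m s x)) => //.
- by move=> k _ _; apply: pi_dvd0.
- by move=> ? ?; apply: ord_ge_uptoD.
Qed.

Lemma ord_ge_uptoM m a b x y :
  ord_ge_upto m a x -> ord_ge_upto m b y -> ord_ge_upto m (a * b) (x + y).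
Proof.
move=> Ha Hb k km kxy.
have [y_le0|y_gt0] := leP (y + 1) 0.
  rewrite -[k]addn0; apply: pi_dvdM (pi_dvd_exp0 _ _); apply: Ha => //; lra.
(* split [k] as [(k - j) + j] with [j] the largest admissible precision for [b] *)
have exP : exists j, (j <= k)%N && (j%:R < y + 1) by exists 0%N.
have ubP j : (j <= k)%N && (j%:R < y + 1) -> (j <= k)%N by case/andP.
have [j /andP[jk jy] jmax] := ex_maxnP exP ubP.
rewrite -(subnK jk); apply: pi_dvdM; last by apply: Hb => //; apply: leq_trans km.
have [->|jk_neq] := eqVneq j k; first by rewrite subnn; apply: pi_dvd_exp0.
have jk_lt : (j < k)%N by rewrite ltn_neqAle jk_neq.
have yj : y <= j%:R.
  rewrite leNgt; apply/negP => yj.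
  have jy1 : (j.+1)%:R < y + 1 by rewrite -natr1 ltrD2r.
  by have := jmax j.+1; rewrite jk_lt jy1 ltnn => /(_ isT).
apply: Ha; first by rewrite (leq_trans (leq_subr _ _)).
rewrite natrB //; lra.
Qed.

Lemma ord_ge_upto_pi m a x : ord_ge_upto m a x -> ord_ge_upto m.+1 (pi * a) (x + 1).
Proof.
move=> H [_ _|k]; first exact: pi_dvd_exp0.
rewrite ltnS -natr1 ltrD2r => km kx.
by rewrite -add1n; apply: pi_dvdM (pi_dvd_expr _ _) (H _ km kx).
Qed.

End TruncatedValuation.

Section Exponents.
Variable n : nat.
Implicit Types u v w : expo n.

Definition expo_le u w := [forall j, (tnth u j <= tnth w j)%N].
Definition expo_add u v : expo n := [tuple (tnth u j + tnth v j)%N | j < n].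
Definition expo_sub w u : expo n := [tuple (tnth w j - tnth u j)%N | j < n].
Definition expoX (i : 'I_n) (k : nat) : expo n := [tuple ((i == j) * k)%N | j < n].

Lemma deg_add u v : deg (expo_add u v) = (deg u + deg v)%N.
Proof. by rewrite /deg -big_split; apply: eq_bigr => j _; rewrite tnth_mktuple. Qed.

Lemma expo_subKC u w : expo_le u w -> expo_add u (expo_sub w u) = w.
Proof. by move/forallP=> uw; apply: eq_from_tnth => j; rewrite !tnth_mktuple subnKC. Qed.

Lemma expo_addKC u v : expo_sub (expo_add u v) u = v.
Proof. by apply: eq_from_tnth => j; rewrite !tnth_mktuple addKn. Qed.

Lemma expo_le_addr u v : expo_le u (expo_add u v).
Proof. by apply/forallP => j; rewrite tnth_mktuple leq_addr. Qed.

Lemma deg_sub u w : expo_le u w -> deg w = (deg u + deg (expo_sub w u))%N.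
Proof. by move=> uw; rewrite -deg_add expo_subKC. Qed.

Lemma deg_expoX i k : deg (expoX i k) = k.
Proof.
rewrite /deg (bigD1 i) //= tnth_mktuple eqxx mul1n big1 ?addn0 // => j ji.
by rewrite tnth_mktuple eq_sym (negPf ji).
Qed.

Lemma expoX_le i k v : (k <= tnth v i)%N -> expo_le (expoX i k) v.
Proof.
by move=> kv; apply/forallP => j; rewrite tnth_mktuple; case: eqP => [<-|_]; rewrite ?mul1n.
Qed.

Lemma tnth_le_deg w j : (tnth w j <= deg w)%N.
Proof. by rewrite /deg (bigD1 j) //= leq_addr. Qed.

Lemma expo_deg_lt_enum N : exists s : seq (expo n), forall v, (deg v < N)%N -> v \in s.
Proof.
exists [seq map_tuple (@nat_of_ord N) t | t : n.-tuple 'I_N] => v vN.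
apply/mapP; exists [tuple Ordinal (leq_ltn_trans (tnth_le_deg v j) vN) | j < n].
  by rewrite mem_enum.
by apply: eq_from_tnth => j; rewrite tnth_map tnth_mktuple.
Qed.

End Exponents.

Section MonomialProducts.
Variables (R : idomainType) (n : nat).
Implicit Types (u v w : expo n) (F G H : ps R n).

Lemma psmul_monol u H w :
  psmul (psmono R u) H w = if expo_le u w then H (expo_sub w u) else 0.
Proof.
rewrite /psmul /psmono; case: ifP => [uw | Nuw]; last first.
  rewrite big1 // => t tw; case: eqP => [tu|_]; last by rewrite mul0r.
  case/negP: Nuw; rewrite -tu; apply/forallP => j; rewrite tnth_map.
  exact: (forallP tw).
have uj_lt j : (tnth u j < (deg w).+1)%N.
  by rewrite ltnS (leq_trans (forallP uw j)) ?tnth_le_deg.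
pose t0 : n.-tuple 'I_(deg w).+1 := [tuple Ordinal (uj_lt j) | j < n].
have t0u : map_tuple (@nat_of_ord _) t0 = u.
  by apply: eq_from_tnth => j; rewrite tnth_map tnth_mktuple.
rewrite (bigD1 t0) /=; last first.
  by apply/forallP => j; rewrite tnth_mktuple (forallP uw).
rewrite t0u eqxx mul1r big1 ?addr0.
  by congr H; apply: eq_from_tnth => j; rewrite !tnth_mktuple.
move=> t /andP[_ tt0]; case: eqP => [tu|_]; last by rewrite mul0r.
case/negP: tt0; apply/eqP/eq_from_tnth => j; apply: val_inj.
have -> : val (tnth t0 j) = tnth u j by rewrite tnth_mktuple.
by rewrite -tu tnth_map.
Qed.

Lemma psmono_add u v : psmul (psmono R u) (psmono R v) = psmono R (expo_add u v).
Proof.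
apply: functional_extensionality => w; rewrite psmul_monol /psmono.
case: ifP => [uw|Nuw].
  by congr (if _ then _ else _); apply/eqP/eqP => [<-|->]; rewrite ?expo_subKC ?expo_addKC.
by case: eqP => // wuv; rewrite wuv expo_le_addr in Nuw.
Qed.

Lemma psX_expoX (i : 'I_n) : psX R i = psmono R (expoX i 1).
Proof. by congr psmono; apply: eq_from_tnth => j; rewrite !tnth_mktuple muln1. Qed.

Lemma pspow_psX (i : 'I_n) k : pspow (psX R i) k = psmono R (expoX i k).
Proof.
elim: k => [|k IH].
  by congr psmono; apply: eq_from_tnth => j; rewrite !tnth_mktuple muln0.
rewrite /pspow iterS -/(pspow _ _) IH psX_expoX psmono_add; congr psmono.
by apply: eq_from_tnth => j; rewrite !tnth_mktuple -mulnDr.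
Qed.

Lemma psmulDl F G H : psmul (psadd F G) H = psadd (psmul F H) (psmul G H).
Proof.
apply: functional_extensionality => w; rewrite /psmul /psadd -big_split.
by apply: eq_bigr => t _; rewrite mulrDl.
Qed.

Lemma psmulZl r F H : psmul (psscale r F) H = psscale r (psmul F H).
Proof.
apply: functional_extensionality => w; rewrite /psmul /psscale mulr_sumr.
by apply: eq_bigr => t _; rewrite mulrA.
Qed.

End MonomialProducts.

Section GrowthClasses.
Variables (R : idomainType) (n : nat) (RR : realType) (pi : R).
Implicit Types (b c : RR) (F G : ps R n) (v : expo n).

Definition inL_upto m b c F : Prop :=
  forall v, ord_ge_upto pi m (F v) (b * (deg v)%:R + c).

Lemma inL_uptoP b c F : inL pi b c F <-> forall m, inL_upto m b c F.
Proof.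
split=> [FL m v | FL v]; first exact: (ord_geP _ _ _).1 (FL v) m.
by apply/ord_geP => m; apply: FL.
Qed.

Lemma inL_upto_le m b c c' F : c' <= c -> inL_upto m b c F -> inL_upto m b c' F.
Proof. by move=> cc' FL v; apply: ord_ge_upto_le (FL v); rewrite lerD2l. Qed.

Lemma inL_inA0 b c F : 0 < b -> inL pi b c F -> inA0 pi F.
Proof.
move=> b_gt0 FL k; pose N := Num.Def.archi_bound `|(k%:R - c) / b|.
exists N => v Nv; apply: FL.
have kN : (k%:R - c) / b < N%:R.
  by apply: le_lt_trans (ler_norm _) _; apply: archi_boundP.
have : (k%:R - c) / b < (deg v)%:R by apply: lt_le_trans kN _; rewrite ler_nat.
rewrite ltr_pdivrMr //; lra.
Qed.

Lemma inA0Z r F : inA0 pi F -> inA0 pi (psscale r F).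
Proof. by move=> FA k; have [N FN] := FA k; exists N => v vN; apply/pi_dvdMl/FN. Qed.

Lemma inL_psmono b v : inL pi b (- b * (deg v)%:R) (psmono R v).
Proof.
move=> w k; rewrite /psmono; case: eqP => [->|_] kv; last exact: pi_dvd0.
have : (k < 1)%N by rewrite -(ltr_nat RR); lra.
by rewrite ltnS leqn0 => /eqP->; apply: pi_dvd_exp0.
Qed.

Lemma inL_uptoM m b c c' F G :
  inL_upto m b c F -> inL_upto m b c' G -> inL_upto m b (c + c') (psmul F G).
Proof.
move=> FL GL w; apply: ord_ge_upto_sum => t tw.
set u := map_tuple (@nat_of_ord _) t.
have uw : expo_le u w by apply/forallP => j; rewrite tnth_map (forallP tw).
have -> : [tuple (tnth w i - tnth t i)%N | i < n] = expo_sub w u.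
  by apply: eq_from_tnth => j; rewrite !tnth_mktuple tnth_map.
apply: ord_ge_upto_le (ord_ge_uptoM (FL u) (GL (expo_sub w u))).
by rewrite (deg_sub uw) natrD; lra.
Qed.

Lemma inL_mul b c c' F G : inL pi b c F -> inL pi b c' G -> inL pi b (c + c') (psmul F G).
Proof. by move=> /inL_uptoP FL /inL_uptoP GL; apply/inL_uptoP => m; apply: inL_uptoM. Qed.

Lemma inL_divpi b b' F :
  pi != 0 -> 0 <= b -> b <= b' -> inL pi b' 0 (psscale pi F) -> inL pi b (-1) F.
Proof.
move=> pi_neq0 b_ge0 bb' piFL v k kv.
apply: (@pi_dvd_cancel _ pi 1%N) => //; rewrite expr1 add1n; apply: piFL.
have : 0 <= ((deg v)%:R : RR) by [].
rewrite -natr1; nra.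
Qed.

Lemma inA0_split m F : pi != 0 -> inA0 pi F ->
  exists N (t : ps R n), inA0 pi t /\
    F = psadd (fun v => if (deg v < N)%N then F v else 0) (psscale (pi ^+ m) t).
Proof.
move=> pi_neq0 FA; have [N FN] := FA m.
pose t v := if (deg v < N)%N then 0 else epsilon (inhabits 0) (fun r => F v = pi ^+ m * r).
have tE v : (N <= deg v)%N -> F v = pi ^+ m * t v.
  move=> vN; rewrite /t ltnNge vN /=.
  exact: (epsilon_spec (inhabits 0) (fun r => F v = pi ^+ m * r)) (FN v vN).
exists N, t; split.
  move=> k; have [N' FN'] := FA (m + k)%N; exists (maxn N N') => v.
  rewrite geq_max => /andP[vN vN'].
  by apply: (pi_dvd_cancel (m := m) pi_neq0); rewrite -tE //; apply: FN'.
apply: functional_extensionality => v; rewrite /psadd /psscale.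
by case: ltnP => vN; [rewrite /t vN mulr0 addr0 | rewrite add0r tE].
Qed.

End GrowthClasses.

Arguments inL_psmono {R n RR} pi b v.

Lemma is_complete_dvr_pi_neq0 (R : idomainType) (pi : R) q : is_complete_dvr pi q -> pi != 0.
Proof. by case=> _ []. Qed.

Lemma is_complete_dvr_q_gt0 (R : idomainType) (pi : R) q : is_complete_dvr pi q -> (0 < q)%N.
Proof.
case=> _ [_ [_ [_ [_ [reps [<- [reps_cover _]]]]]]].
by have [r] := reps_cover 0; case: reps {reps_cover}.
Qed.

Section DworkOperator.
Variables (RR : realType) (R : idomainType) (n : nat) (pi : R) (q : nat).
Variables (sigma Theta : ps R n -> ps R n) (f : 'I_n -> ps R n) (b b_sigma c1 : RR).
Hypotheses (pi_neq0 : pi != 0) (q_gt0 : (0 < q)%N) (b_gt0 : 0 < b) (b_le : b <= b_sigma).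
Hypothesis pif_L : forall i, inL pi b_sigma 0 (psscale pi (f i)).
Hypothesis sigmaX : forall i, sigma (psX R i) = psadd (pspow (psX R i) q) (psscale pi (f i)).
Hypothesis Theta_dwork : is_dwork_op pi sigma Theta.
Hypothesis Theta_reduced : forall u : expo n, (forall i, tnth u i < q)%N ->
  inL pi (q%:R * b) c1 (Theta (psmono R u)).
Implicit Types (F G : ps R n) (v w : expo n).

Lemma ThetaD F G : inA0 pi F -> inA0 pi G -> Theta (psadd F G) = psadd (Theta F) (Theta G).
Proof. by case: Theta_dwork => _ [+ _]; apply. Qed.

Lemma ThetaZ r F : inA0 pi F -> Theta (psscale r F) = psscale r (Theta F).
Proof. by case: Theta_dwork => _ [_ [+ _]]; apply. Qed.

Lemma inA0_psmono v : inA0 pi (psmono R v).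
Proof. exact: inL_inA0 b_gt0 (inL_psmono pi b v). Qed.

Lemma inL_f_psmono i v : inL pi b (-1 + - b * (deg v)%:R) (psmul (f i) (psmono R v)).
Proof. exact: inL_mul (inL_divpi pi_neq0 (ltW b_gt0) b_le (pif_L i)) (inL_psmono pi b v). Qed.

(* [sigma(X_i) X^v = X^(v + q e_i) + pi f_i X^v], to which [Theta] is applied. *)
Lemma Theta_psmono_expoX i v w :
  Theta (psmono R (expo_add (expoX i q) v)) w =
  psmul (psX R i) (Theta (psmono R v)) w - pi * Theta (psmul (f i) (psmono R v)) w.
Proof.
have fvA0 := inL_inA0 b_gt0 (@inL_f_psmono i v).
have XA0 : inA0 pi (psX R i) by rewrite psX_expoX; apply: inA0_psmono.
case: Theta_dwork => _ [_ [_ /(_ _ _ XA0 (inA0_psmono v))]].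
rewrite sigmaX psmulDl pspow_psX psmono_add psmulZl.
rewrite (ThetaD (inA0_psmono _) (inA0Z _ fvA0)) (ThetaZ _ fvA0).
by move/(congr1 (fun h => h w)); rewrite /psadd /psscale => <-; rewrite addrK.
Qed.

Definition ThetaL_upto m := forall c g,
  inL pi b c g -> inL_upto pi m (q%:R * b) (c + c1) (Theta g).

Definition Theta_psmonoL_upto m := forall v,
  inL_upto pi m (q%:R * b) (c1 - b * (deg v)%:R) (Theta (psmono R v)).

Lemma Theta_psmonoL_step m : ThetaL_upto m -> Theta_psmonoL_upto m.+1.
Proof.
move=> ThetaL v; have [d] := ubnP (deg v); elim: d v => // d IHd v /ltnSE-vd.
have [v_reduced | ] := boolP [forall i, tnth v i < q]%N.
  apply: inL_upto_le ((inL_uptoP _ _ _ _).1 (Theta_reduced (forallP v_reduced)) _).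
  by rewrite gerBl mulr_ge0 // ltW.
rewrite negb_forall => /existsP[i]; rewrite -leqNgt => q_le_vi.
have qi_le := expoX_le q_le_vi; set v' := expo_sub v (expoX i q).
have deg_v : deg v = (q + deg v')%N by rewrite (deg_sub qi_le) deg_expoX.
rewrite -(expo_subKC qi_le) -/v' => w; rewrite Theta_psmono_expoX.
rewrite psX_expoX; apply: ord_ge_uptoB.
  have XL := (inL_uptoP _ _ _ _).1 (inL_psmono pi (q%:R * b) (expoX i 1)) m.+1.
  have v'_lt : (deg v' < d)%N.
    by apply: leq_trans vd; rewrite deg_v -[X in (X < _)%N]add0n ltn_add2r.
  have XTL := inL_uptoM XL (IHd v' v'_lt).
  by apply: ord_ge_upto_le (XTL w); rewrite deg_add !deg_expoX natrD; lra.
apply: ord_ge_upto_le (ord_ge_upto_pi (ThetaL _ _ (@inL_f_psmono i v') w)).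
have : 0 <= b * q%:R by rewrite mulr_ge0 // ltW.
by rewrite deg_add deg_expoX natrD; lra.
Qed.

Lemma ThetaL_finite_support m (s : seq (expo n)) c g :
  Theta_psmonoL_upto m -> {in [predC s], forall v, g v = 0} ->
  inL pi b c g -> inL_upto pi m (q%:R * b) (c + c1) (Theta g).
Proof.
move=> Theta_monoL; elim: s c g => [|v0 s IHs] c g g_supp gL.
  have -> : g = psscale 0 g.
    by apply: functional_extensionality => v; rewrite /psscale mul0r g_supp.
  rewrite (ThetaZ _ (inL_inA0 b_gt0 gL)) => w k _ _.
  by rewrite /psscale mul0r; apply: pi_dvd0.
pose g' v := if v == v0 then 0 else g v.
have gE : g = psadd (psscale (g v0) (psmono R v0)) g'.
  apply: functional_extensionality => v; rewrite /psadd /psscale /psmono /g'.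
  by case: eqP => [->|_]; rewrite ?mulr1 ?addr0 ?mulr0 ?add0r.
have g'L : inL pi b c g'.
  by move=> v; rewrite /g'; case: eqP => _ //; apply: ord_ge0.
have g'_supp : {in [predC s], forall v, g' v = 0}.
  move=> v vs; rewrite /g'; case: eqP => // /eqP v_neq; apply: g_supp.
  by rewrite !inE negb_or v_neq.
rewrite gE (ThetaD (inA0Z _ (inA0_psmono v0)) (inL_inA0 b_gt0 g'L)).
rewrite (ThetaZ _ (inA0_psmono v0)) => w; apply: ord_ge_uptoD; last exact: IHs.
apply: ord_ge_upto_le (ord_ge_uptoM ((ord_geP _ _ _).1 (gL v0) m) (Theta_monoL v0 w)).
lra.
Qed.

Lemma ThetaL_step m : Theta_psmonoL_upto m -> ThetaL_upto m.
Proof.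
move=> Theta_monoL c g gL.
have [N [t [tA0 gE]]] := inA0_split m pi_neq0 (inL_inA0 b_gt0 gL).
set g_low := fun v => _ in gE.
have g_lowL : inL pi b c g_low.
  move=> v; rewrite /g_low; case: ifP => _; first exact: gL.
  exact: ord_ge0.
have [s s_low] := expo_deg_lt_enum n N.
have g_low_supp : {in [predC s], forall v, g_low v = 0}.
  by move=> v; rewrite inE /g_low; case: ltnP => // /s_low->.
rewrite gE (ThetaD (inL_inA0 b_gt0 g_lowL) (inA0Z _ tA0)) (ThetaZ _ tA0) => w.
apply: ord_ge_uptoD; first exact: ThetaL_finite_support g_low_supp g_lowL w.
by move=> k km _; apply/pi_dvdMr/(pi_dvd_leq km)/pi_dvd_expr.
Qed.

Lemma ThetaL c g : inL pi b c g -> inL pi (q%:R * b) (c + c1) (Theta g).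
Proof.
move=> gL; apply/inL_uptoP => m; move: c g gL; elim: m => [|m IHm] c g gL.
  by move=> w; apply: ord_ge_upto0.
exact: ThetaL_step (Theta_psmonoL_step IHm) _ _ gL.
Qed.

End DworkOperator.

Theorem theorem4p6 (RR : realType) (R : idomainType) (n : nat) (pi : R) (q : nat)
  (sigma : ps R n -> ps R n) (f : 'I_n -> ps R n) (b_sigma : rat)
  (Theta : ps R n -> ps R n) (b c1 : rat) :
  (0 < n)%N ->
  is_complete_dvr pi q ->
  (forall i, inA RR pi (f i)) ->
  is_ralg_endo pi sigma ->
  (forall i, sigma (psX R i) = psadd (pspow (psX R i) q) (psscale pi (f i))) ->
  0 < b_sigma ->
  (forall i, inL pi (ratr b_sigma : RR) 0 (psscale pi (f i))) ->
  is_dwork_op pi sigma Theta ->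
  overconvergent RR pi Theta ->
  0 < b -> b <= b_sigma ->
  (forall u : expo n, (forall i, tnth u i < q)%N ->
     inL pi (q%:R * ratr b : RR) (ratr c1) (Theta (psmono R u))) ->
  forall (c : RR) (g : ps R n),
    inL pi (ratr b) c g -> inL pi (q%:R * ratr b) (c + ratr c1) (Theta g).
Proof.
move=> _ dvr _ _ sigmaX _ pif_L Theta_dwork _ b_gt0 b_le Theta_reduced c g.
apply: (ThetaL (is_complete_dvr_pi_neq0 dvr) (is_complete_dvr_q_gt0 dvr) _ _
          pif_L sigmaX Theta_dwork Theta_reduced).
- by rewrite ltr0q.
- by rewrite ler_rat.
Qed.
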